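(* Take $N=1$, $\rho=0.35$, $Q=321$, $A=167$, $B=1.9$, $\alpha_1=0.32$, $\alpha_i=0.36$, $\alpha_2=0.8$, $T_c=0$, $D=0.25$, and any fixed $R>0$. Let $V$ be the piecewise vector field on $\mathbb R^3$ (coordinates $(T_0,T_2,\eta)$) defined below. Then for all sufficiently small $\varepsilon>0$, the system $(\dot T_0,\dot T_2,\dot\eta)=V(T_0,T_2,\eta)$ has an asymptotically stable equilibrium whose $\eta$-coordinate lies in the open interval $(0,\rho)$ (a ''Jormungand'' state: ice line in tropical latitudes, not a snowball state $\eta=0$).
   Context: $p_0(y)=1$, $p_2(y)=\tfrac12(3y^2-1)$. Let $s(y)=s_0+s_2p_2(y)$ with $s_0=1$, $s_2=-0.477$; $q_0=s$, $q_2=s\,p_2$. For $n=0,1$: \[ \overline b_{2n}(\eta)=\alpha_2 s_{2n}-(4n+1)(\alpha_2-\alpha_1)\int_0^\eta q_{2n}(y)\,dy, \] \[ \overline a_{2n}(\eta)=\alpha_2 s_{2n}-(4n+1)\Bigl((\alpha_2-\alpha_i)\int_\eta^\rho q_{2n}(y)\,dy+(\alpha_2-\alpha_1)\int_0^\eta q_{2n}(y)\,dy\Bigr), \] \[ f^{\mp}_0(\eta)=\tfrac1B\bigl(Q(s_0-\overline c_0(\eta))-A\bigr),\qquad f^{\mp}_{2}(\eta)=\frac{Q(s_{2}-\overline c_{2}(\eta))}{B+6D}, \] with $\overline c=\overline a$ for $f^-$ and $\overline c=\overline b$ for $f^+$. The vector fields $V^\pm$ are \[ \dot T_0=-\tfrac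 BR\bigl(T_0-f^\pm_0(\eta)\bigr),\quad \dot T_2=-\tfrac{B+6D}{R}\bigl(T_2-f^\pm_2(\eta)\bigr),\quad \dot\eta=\varepsilon\bigl(T_0+T_2p_2(\eta)-T_c\bigr), \] and $V=V^-$ on $\{\eta<\rho\}$, $V=V^+$ on $\{\eta\ge\rho\}$. (This corresponds to the Jormungand albedo: for $\eta<\rho$, albedo $\alpha_1$ for $y<\eta$, $\alpha_i$ for $\eta<y<\rho$, $\alpha_2$ for $y>\rho$; for $\eta\ge\rho$, albedo $\alpha_1$ for $y<\eta$, $\alpha_2$ for $y>\eta$.) *)

From Stdlib Require Import Reals Lra.
Open Scope R_scope.

Definition rho : R := 35/100.
Definition Qc : R := 321.
Definition Ac : R := 167.
Definition Bc : R := 19/10.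
Definition alpha1 : R := 32/100.
Definition alphai : R := 36/100.
Definition alpha2 : R := 8/10.
Definition Tc : R := 0.
Definition Dc : R := 25/100.
Definition s0 : R := 1.
Definition s2 : R := -(477/1000).

Definition p2 (y : R) : R := (3 * y ^ 2 - 1) / 2.
Definition s (y : R) : R := s0 + s2 * p2 y.
Definition q0 (y : R) : R := s y.
Definition q2 (y : R) : R := s y * p2 y.

(* Since q0, q2 are polynomials,
   int_a^b q = P(b) - P(a) with the explicit antiderivatives below
   (P0' = q0, P2' = q2, P0(0) = P2(0) = 0):
     int_0^y s      = y + s2 (y^3 - y)/2
     int_0^y s p2   = (y^3 - y)/2 + s2 (9 y^5/5 - 2 y^3 + y)/4          *)
Definition P0 (y : R) : R := y + s2 * (y ^ 3 - y) / 2.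
Definition P2 (y : R) : R := (y ^ 3 - y) / 2 + s2 * (9 * y ^ 5 / 5 - 2 * y ^ 3 + y) / 4.
Definition int_q0 (a b : R) : R := P0 b - P0 a.
Definition int_q2 (a b : R) : R := P2 b - P2 a.

(* bbar_{2n}, abar_{2n} for n = 0 (index 0) and n = 1 (index 2) *)
Definition bbar0 (eta : R) : R := alpha2 * s0 - 1 * (alpha2 - alpha1) * int_q0 0 eta.
Definition bbar2 (eta : R) : R := alpha2 * s2 - 5 * (alpha2 - alpha1) * int_q2 0 eta.
Definition abar0 (eta : R) : R :=
  alpha2 * s0 - 1 * ((alpha2 - alphai) * int_q0 eta rho + (alpha2 - alpha1) * int_q0 0 eta).
Definition abar2 (eta : R) : R :=
  alpha2 * s2 - 5 * ((alpha2 - alphai) * int_q2 eta rho + (alpha2 - alpha1) * int_q2 0 eta).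

Definition fm0 (eta : R) : R := / Bc * (Qc * (s0 - abar0 eta) - Ac).
Definition fm2 (eta : R) : R := Qc * (s2 - abar2 eta) / (Bc + 6 * Dc).
Definition fp0 (eta : R) : R := / Bc * (Qc * (s0 - bbar0 eta) - Ac).
Definition fp2 (eta : R) : R := Qc * (s2 - bbar2 eta) / (Bc + 6 * Dc).

Definition f0 (eta : R) : R := if Rlt_dec eta rho then fm0 eta else fp0 eta.
Definition f2 (eta : R) : R := if Rlt_dec eta rho then fm2 eta else fp2 eta.

Definition V_T0 (Rr eps T0 T2 eta : R) : R := - (Bc / Rr) * (T0 - f0 eta).
Definition V_T2 (Rr eps T0 T2 eta : R) : R := - ((Bc + 6 * Dc) / Rr) * (T2 - f2 eta).
Definition V_eta (Rr eps T0 T2 eta : R) : R := eps * (T0 + T2 * p2 eta - Tc).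

Definition dist3 (a0 a1 a2 b0 b1 b2 : R) : R :=
  sqrt ((a0 - b0) ^ 2 + (a1 - b1) ^ 2 + (a2 - b2) ^ 2).

Definition is_solution_on (Rr eps : R) (x0 x1 x2 : R -> R) (Tend : R) : Prop :=
  (forall t, 0 <= t < Tend -> forall e, 0 < e -> exists d, 0 < d /\
     forall u, 0 <= u < Tend -> Rabs (u - t) < d ->
       dist3 (x0 u) (x1 u) (x2 u) (x0 t) (x1 t) (x2 t) < e) /\
  (forall t, 0 < t < Tend ->
     derivable_pt_lim x0 t (V_T0 Rr eps (x0 t) (x1 t) (x2 t)) /\
     derivable_pt_lim x1 t (V_T2 Rr eps (x0 t) (x1 t) (x2 t)) /\
     derivable_pt_lim x2 t (V_eta Rr eps (x0 t) (x1 t) (x2 t))).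

Definition is_global_solution (Rr eps : R) (x0 x1 x2 : R -> R) : Prop :=
  forall Tend, 0 < Tend -> is_solution_on Rr eps x0 x1 x2 Tend.

Definition is_equilibrium (Rr eps a0 a1 a2 : R) : Prop :=
  V_T0 Rr eps a0 a1 a2 = 0 /\ V_T2 Rr eps a0 a1 a2 = 0 /\ V_eta Rr eps a0 a1 a2 = 0.

Definition lyapunov_stable (Rr eps a0 a1 a2 : R) : Prop :=
  forall e, 0 < e -> exists d, 0 < d /\
    forall (x0 x1 x2 : R -> R) (Tend : R), 0 < Tend ->
      is_solution_on Rr eps x0 x1 x2 Tend ->
      dist3 (x0 0) (x1 0) (x2 0) a0 a1 a2 < d ->
      forall t, 0 <= t < Tend -> dist3 (x0 t) (x1 t) (x2 t) a0 a1 a2 < e.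

Definition attractive (Rr eps a0 a1 a2 : R) : Prop :=
  exists d, 0 < d /\
    forall (x0 x1 x2 : R -> R),
      is_global_solution Rr eps x0 x1 x2 ->
      dist3 (x0 0) (x1 0) (x2 0) a0 a1 a2 < d ->
      forall e, 0 < e -> exists T, forall t, T <= t ->
        dist3 (x0 t) (x1 t) (x2 t) a0 a1 a2 < e.

Definition asymptotically_stable_equilibrium (Rr eps a0 a1 a2 : R) : Prop :=
  is_equilibrium Rr eps a0 a1 a2 /\
  lyapunov_stable Rr eps a0 a1 a2 /\ attractive Rr eps a0 a1 a2.

(* The equilibrium sits on the slow manifold T = f^-(eta) of the fast temperature
   equations, at a root eta_s in [0.24, 0.25] of the reduced ice-line drift
   h(eta) = f^-_0(eta) + f^-_2(eta) p_2(eta), where h' lies in [-40, -10].  With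
   L = (T0 - f^-_0(eta))^2 + (T2 - f^-_2(eta))^2 + (eta - eta_s)^2, the fast
   directions contract at rate B/R and the slow one at rate eps |h'|, so for
   eps <= B/(10^6 R) one gets dL/dt <= -eps L on the sublevel set {L < 1/400},
   which lies inside {eta < rho} where V = V^-.  Hence L (1 + eps (t - c)) is
   nonincreasing, which gives both stability and attractivity. *)

From Stdlib Require Import Reals Lra Psatz Classical.
From Coquelicot Require Import Coquelicot.
Open Scope R_scope.

Lemma MVT_in (f f' : R -> R) (A B x y : R) :
  (forall c, A <= c <= B -> derivable_pt_lim f c (f' c)) ->
  A <= x <= B -> A <= y <= B ->
  exists c, A <= c <= B /\ f x - f y = f' c * (x - y).
Proof.
  intros Hf Hx Hy.
  assert (Hmin : A <= Rmin y x) by (apply Rmin_glb; lra).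
  assert (Hmax : Rmax y x <= B) by (apply Rmax_lub; lra).
  destruct (MVT_gen f y x f') as [c [Hc Ec]].
  - intros c Hc. apply is_derive_Reals, Hf. lra.
  - intros c Hc. apply derivable_continuous_pt. exists (f' c). apply Hf. lra.
  - exists c. split; [lra | exact Ec].
Qed.

Lemma Lipschitz_of_derive_bound (f f' : R -> R) (A B K x y : R) :
  (forall c, A <= c <= B -> derivable_pt_lim f c (f' c)) ->
  (forall c, A <= c <= B -> Rabs (f' c) <= K) ->
  A <= x <= B -> A <= y <= B -> Rabs (f x - f y) <= K * Rabs (x - y).
Proof.
  intros Hf HK Hx Hy.
  destruct (MVT_in f f' A B x y Hf Hx Hy) as [c [Hc ->]].
  rewrite Rabs_mult. apply Rmult_le_compat_r; [apply Rabs_pos | exact (HK c Hc)].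
Qed.

Lemma sublevel_invariant (L : R -> R) (lam c b : R) :
  c <= b -> L c < lam ->
  (forall t, c <= t <= b -> continuity_pt L t) ->
  (forall t, c < t <= b -> (forall s, c <= s < t -> L s < lam) -> L t < lam) ->
  forall t, c <= t <= b -> L t < lam.
Proof.
  intros Hcb Hc Hcont Hstep.
  set (S t := c <= t <= b /\ forall s, c <= s <= t -> L s < lam).
  assert (Sc : S c) by (split; [lra | intros s Hs; replace s with c by lra; exact Hc]).
  assert (Sb : bound S) by (exists b; intros t [Ht _]; lra).
  destruct (completeness S Sb (ex_intro _ c Sc)) as [tau [Hub Hlub]].
  assert (Hctau : c <= tau) by (apply Hub; exact Sc).
  assert (Htaub : tau <= b) by (apply Hlub; intros t [Ht _]; lra).
  assert (below : forall s, c <= s < tau -> L s < lam).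
  { intros s Hs. apply NNPP. intros Hns. assert (Hs_ub : is_upper_bound S s).
    { intros t [Ht Hall]. apply Rnot_lt_le. intros Hst. apply Hns, Hall. lra. }
    apply Hlub in Hs_ub. lra. }
  assert (Ltau : L tau < lam).
  { destruct (Req_dec tau c) as [-> | Hne]; [exact Hc | apply Hstep; [lra | exact below]]. }
  assert (Htau : tau = b).
  { apply NNPP. intros Hne.
    destruct (Hcont tau ltac:(lra) (lam - L tau) ltac:(lra)) as [r [Hr Hclose]].
    set (t' := Rmin (tau + r / 2) b).
    assert (Ht' : tau < t' <= tau + r / 2)
      by (split; [apply Rmin_glb_lt; lra | apply Rmin_l]).
    assert (Ht'b : t' <= b) by apply Rmin_r.
    assert (St' : S t').
    { split; [lra |].
      intros s Hs. destruct (Rlt_le_dec s tau) as [Hlt | Hge]; [apply below; lra |].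
      destruct (Req_dec s tau) as [-> | Hsne]; [exact Ltau |].
      assert (Hd : R_dist (L s) (L tau) < lam - L tau).
      { apply Hclose. split; [split; [exact I | intros E; apply Hsne; symmetry; exact E] |].
        unfold R_dist. apply Rabs_def1; lra. }
      unfold R_dist in Hd. apply Rabs_def2 in Hd. lra. }
    apply Hub in St'. lra. }
  intros t Ht. destruct (Req_dec t tau) as [-> | Hne]; [exact Ltau | apply below; lra].
Qed.

Lemma sublevel_decay (L L' : R -> R) (eps lam c b : R) :
  0 <= eps -> c <= b -> L c < lam ->
  (forall t, c <= t <= b -> derivable_pt_lim L t (L' t)) ->
  (forall t, c <= t <= b -> 0 <= L t) ->
  (forall t, c <= t <= b -> L t < lam -> L' t + eps * L t <= 0) ->
  forall t, c <= t <= b -> L t * (1 + eps * (t - c)) <= L c.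
Proof.
  intros Heps Hcb Hc HL Hpos Hdiss.
  set (G t := L t * (1 + eps * (t - c))).
  set (G' t := L' t * (1 + eps * (t - c)) + L t * eps).
  assert (dG : forall t, c <= t <= b -> derivable_pt_lim G t (G' t)).
  { intros t Ht. apply (derivable_pt_lim_mult L (fun t => 1 + eps * (t - c))); [exact (HL t Ht) |].
    apply is_derive_Reals. auto_derive; [exact I | ring]. }
  (* G' = (1 + eps (t - c)) (L' + eps L) - eps^2 (t - c) L *)
  assert (G'_nonpos : forall t, c <= t <= b -> L t < lam -> G' t <= 0).
  { intros t Ht HLt. pose proof (Hdiss t Ht HLt). pose proof (Hpos t Ht).
    set (k := eps * (t - c)).
    assert (0 <= k) by (apply Rmult_le_pos; lra).
    assert ((1 + k) * (L' t + eps * L t) <= 0) by nra.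
    assert (0 <= k * (eps * L t)) by (apply Rmult_le_pos; [lra | apply Rmult_le_pos; lra]).
    unfold G'. fold k. nra. }
  assert (G_decreasing : forall t, c < t <= b -> (forall s, c <= s < t -> L s < lam) -> G t <= G c).
  { intros t Ht Hbelow.
    destruct (MVT_cor2 G G' c t (proj1 Ht) (fun s Hs => dG s ltac:(lra))) as [s [E Hs]].
    assert (G' s <= 0) by (apply G'_nonpos; [lra | apply Hbelow; lra]).
    nra. }
  assert (Gc : G c = L c) by (unfold G; ring).
  assert (L_le_G : forall t, c <= t <= b -> L t <= G t).
  { intros t Ht. pose proof (Hpos t Ht).
    assert (0 <= eps * (t - c)) by (apply Rmult_le_pos; lra). unfold G. nra. }
  assert (trapped : forall t, c <= t <= b -> L t < lam).
  { apply sublevel_invariant; [exact Hcb | exact Hc | |].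
    - intros t Ht. apply derivable_continuous_pt. exists (L' t). exact (HL t Ht).
    - intros t Ht Hbelow. pose proof (L_le_G t ltac:(lra)). pose proof (G_decreasing t Ht Hbelow). lra. }
  intros t Ht. fold (G t). rewrite <- Gc.
  destruct (Req_dec t c) as [-> | Hne]; [lra |].
  apply G_decreasing; [lra | intros s Hs; apply trapped; lra].
Qed.

Lemma dissipation_inequality a b eps u v w p d0 d2 H :
  0 < eps -> 10^6 * eps <= a -> 10^6 * eps <= b ->
  Rabs p <= 1 -> Rabs d0 <= 9 -> Rabs d2 <= 11 ->
  H * w <= -10 * w^2 -> Rabs H <= 40 * Rabs w ->
  let E := u + v * p + H in
  2 * u * (- a * u - d0 * (eps * E)) + 2 * v * (- b * v - d2 * (eps * E))
  + 2 * w * (eps * E) + eps * (u^2 + v^2 + w^2) <= 0.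
Proof.
  intros Heps Ha Hb Hp Hd0 Hd2 Hrestore HH E.
  pose proof (Rabs_pos u) as Uge. pose proof (Rabs_pos v) as Vge. pose proof (Rabs_pos w) as Wge.
  assert (HE : Rabs E <= Rabs u + Rabs v + 40 * Rabs w).
  { unfold E. pose proof (Rabs_triang (u + v * p) H). pose proof (Rabs_triang u (v * p)).
    rewrite Rabs_mult in *. nra. }
  assert (coupling : - ((d0 * u + d2 * v) * E)
                     <= (9 * Rabs u + 11 * Rabs v) * (Rabs u + Rabs v + 40 * Rabs w)).
  { assert (Rabs (d0 * u + d2 * v) <= 9 * Rabs u + 11 * Rabs v).
    { pose proof (Rabs_triang (d0 * u) (d2 * v)). rewrite !Rabs_mult in *. nra. }
    eapply Rle_trans; [apply Rle_abs |]. rewrite Rabs_Ropp, Rabs_mult.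
    apply Rmult_le_compat; auto using Rabs_pos. }
  assert (restoring : E * w <= (Rabs u + Rabs v) * Rabs w - 10 * w^2).
  { assert ((u + v * p) * w <= (Rabs u + Rabs v) * Rabs w).
    { eapply Rle_trans; [apply Rle_abs |]. rewrite Rabs_mult.
      pose proof (Rabs_triang u (v * p)). rewrite Rabs_mult in *.
      assert (Rabs v * Rabs p <= Rabs v) by nra. nra. }
    unfold E. nra. }
  (* AM-GM absorbs the cross terms in |w| into -10 w^2. *)
  assert (absorb : forall U V W, 0 <= U -> 0 <= V -> 0 <= W ->
     2 * ((U + V) * W - 10 * W^2) + 2 * ((9 * U + 11 * V) * (U + V + 40 * W)) + (U^2 + V^2 + W^2)
     <= 2 * 10^6 * (U^2 + V^2)).
  { intros U V W HU HV HW.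
    pose proof (pow2_ge_0 (3 * W - 361 / 3 * U)). pose proof (pow2_ge_0 (3 * W - 147 * V)).
    pose proof (pow2_ge_0 (U - V)). nra. }
  pose proof (absorb _ _ _ Uge Vge Wge) as Habs. rewrite !pow2_abs in Habs.
  assert (a * u^2 >= 10^6 * eps * u^2) by nra.
  assert (b * v^2 >= 10^6 * eps * v^2) by nra.
  nra.
Qed.

Lemma sq_shear_le u v w A B :
  Rabs A <= 9 * Rabs w -> Rabs B <= 11 * Rabs w ->
  (u + A)^2 + (v + B)^2 + w^2 <= 405 * (u^2 + v^2 + w^2).
Proof.
  intros HA HB. pose proof (Rabs_pos A). pose proof (Rabs_pos B).
  assert (A^2 <= 81 * w^2) by (rewrite <- (pow2_abs A), <- (pow2_abs w); nra).
  assert (B^2 <= 121 * w^2) by (rewrite <- (pow2_abs B), <- (pow2_abs w); nra).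
  pose proof (pow2_ge_0 (u - A)). pose proof (pow2_ge_0 (v - B)).
  pose proof (pow2_ge_0 u). pose proof (pow2_ge_0 v). nra.
Qed.

Lemma Rabs_le_dist3 a0 a1 a2 b0 b1 b2 :
  Rabs (a0 - b0) <= dist3 a0 a1 a2 b0 b1 b2 /\ Rabs (a1 - b1) <= dist3 a0 a1 a2 b0 b1 b2 /\
  Rabs (a2 - b2) <= dist3 a0 a1 a2 b0 b1 b2.
Proof.
  unfold dist3.
  pose proof (pow2_ge_0 (a0 - b0)). pose proof (pow2_ge_0 (a1 - b1)). pose proof (pow2_ge_0 (a2 - b2)).
  repeat split; rewrite <- sqrt_Rsqr_abs; apply sqrt_le_1_alt; rewrite Rsqr_pow2; lra.
Qed.

Lemma dist3_lt a0 a1 a2 b0 b1 b2 e : 0 < e ->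
  (a0 - b0)^2 + (a1 - b1)^2 + (a2 - b2)^2 < e^2 -> dist3 a0 a1 a2 b0 b1 b2 < e.
Proof.
  intros He H. unfold dist3. rewrite <- (sqrt_pow2 e) by lra. apply sqrt_lt_1_alt. split; [| exact H].
  pose proof (pow2_ge_0 (a0 - b0)). pose proof (pow2_ge_0 (a1 - b1)). pose proof (pow2_ge_0 (a2 - b2)). lra.
Qed.

Ltac unfold_parameters :=
  unfold Qc, Bc, Dc, Ac, alpha1, alpha2, alphai, s0, s2, rho, Tc in *.

(* d abar_{2n} / d eta = -(4n+1) (alpha_i - alpha_1) q_{2n}(eta) *)
Definition dfm0 (eta : R) : R := Qc / Bc * (alphai - alpha1) * q0 eta.
Definition dfm2 (eta : R) : R := 5 * Qc * (alphai - alpha1) * q2 eta / (Bc + 6 * Dc).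

Lemma fm0_derive eta : derivable_pt_lim fm0 eta (dfm0 eta).
Proof.
  apply is_derive_Reals. unfold fm0, abar0, int_q0, P0, dfm0, q0, s, p2.
  auto_derive; [exact I | unfold_parameters; field].
Qed.

Lemma fm2_derive eta : derivable_pt_lim fm2 eta (dfm2 eta).
Proof.
  apply is_derive_Reals. unfold fm2, abar2, int_q2, P2, dfm2, q2, s, p2.
  auto_derive; [exact I | unfold_parameters; field].
Qed.

(* The eta-component of V^- on the slow manifold T = f^-(eta), divided by eps. *)
Definition slow_drift (eta : R) : R := fm0 eta + fm2 eta * p2 eta.
Definition dslow_drift (eta : R) : R := dfm0 eta + dfm2 eta * p2 eta + fm2 eta * (3 * eta).

Lemma slow_drift_derive eta : derivable_pt_lim slow_drift eta (dslow_drift eta).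
Proof.
  unfold dslow_drift. rewrite Rplus_assoc.
  apply (derivable_pt_lim_plus fm0 (fun x => fm2 x * p2 x)); [apply fm0_derive |].
  apply (derivable_pt_lim_mult fm2 p2); [apply fm2_derive |].
  apply is_derive_Reals. unfold p2. auto_derive; [exact I | field].
Qed.

Lemma p2_window y : 19/100 <= y <= 3/10 -> -45/100 <= p2 y <= -36/100.
Proof. intros Hy. unfold p2. split; nra. Qed.

Lemma dfm0_window y : 19/100 <= y <= 3/10 -> 7 <= dfm0 y <= 9.
Proof. intros Hy. unfold dfm0, q0, s, p2. unfold_parameters. split; nra. Qed.

Lemma dfm2_window y : 19/100 <= y <= 3/10 -> -11 <= dfm2 y <= -7.
Proof.
  intros Hy. pose proof (p2_window y Hy) as Hp.
  assert (Hq : -55/100 <= s y * p2 y <= -42/100) by (unfold s, s0, s2; split; nra).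
  unfold dfm2, q2. set (q := s y * p2 y) in *. unfold_parameters. split; lra.
Qed.

Lemma fm2_window y : 19/100 <= y <= 3/10 -> -5103/100 <= fm2 y <= -4980/100.
Proof.
  intros Hy.
  assert (H19 : -4981/100 <= fm2 (19/100) <= -4980/100)
    by (unfold fm2, abar2, int_q2, P2; unfold_parameters; lra).
  destruct (MVT_in fm2 dfm2 (19/100) (3/10) y (19/100)) as [c [Hc E]];
    [intros; apply fm2_derive | exact Hy | lra |].
  pose proof (dfm2_window c Hc). nra.
Qed.

Lemma dslow_drift_window y : 19/100 <= y <= 3/10 -> -40 <= dslow_drift y <= -10.
Proof.
  intros Hy. pose proof (dfm0_window y Hy). pose proof (dfm2_window y Hy).
  pose proof (fm2_window y Hy). pose proof (p2_window y Hy).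
  unfold dslow_drift. split; nra.
Qed.

Lemma slow_drift_root : exists es, 24/100 <= es <= 25/100 /\ slow_drift es = 0.
Proof.
  assert (Hpos : 0 < slow_drift (24/100))
    by (unfold slow_drift, fm0, fm2, abar0, abar2, int_q0, int_q2, P0, P2, p2; unfold_parameters; lra).
  assert (Hneg : slow_drift (25/100) < 0)
    by (unfold slow_drift, fm0, fm2, abar0, abar2, int_q0, int_q2, P0, P2, p2; unfold_parameters; lra).
  destruct (IVT (fun x => - slow_drift x) (24/100) (25/100)) as [es [Hes E]]; [| lra | lra | lra |].
  - intros x. apply continuity_pt_opp, derivable_continuous_pt.
    exists (dslow_drift x). apply slow_drift_derive.
  - exists es. split; [exact Hes | lra].
Qed.

Section Equilibrium.

Variable es : R.
Hypothesis es_window : 24/100 <= es <= 25/100.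
Hypothesis es_root : slow_drift es = 0.

Lemma near_es_window y : Rabs (y - es) < 1/20 -> 19/100 <= y <= 3/10.
Proof. intros Hy. apply Rabs_def2 in Hy. lra. Qed.

Lemma slow_drift_restoring y : Rabs (y - es) < 1/20 -> slow_drift y * (y - es) <= -10 * (y - es)^2.
Proof.
  intros Hy.
  destruct (MVT_in slow_drift dslow_drift (19/100) (3/10) y es) as [c [Hc E]];
    [intros; apply slow_drift_derive | exact (near_es_window y Hy) | lra |].
  rewrite es_root, Rminus_0_r in E. rewrite E.
  pose proof (dslow_drift_window c Hc). pose proof (pow2_ge_0 (y - es)). nra.
Qed.

Lemma Lipschitz_near_es (f f' : R -> R) K y :
  (forall c, derivable_pt_lim f c (f' c)) ->
  (forall c, 19/100 <= c <= 3/10 -> Rabs (f' c) <= K) ->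
  Rabs (y - es) < 1/20 -> Rabs (f y - f es) <= K * Rabs (y - es).
Proof.
  intros Hf HK Hy.
  apply (Lipschitz_of_derive_bound f f' (19/100) (3/10)); [intros; apply Hf | exact HK | |].
  - exact (near_es_window y Hy).
  - lra.
Qed.

Lemma slow_drift_lipschitz y : Rabs (y - es) < 1/20 -> Rabs (slow_drift y) <= 40 * Rabs (y - es).
Proof.
  intros Hy. rewrite <- (Rminus_0_r (slow_drift y)), <- es_root.
  apply (Lipschitz_near_es slow_drift dslow_drift); [exact slow_drift_derive | | exact Hy].
  intros c Hc. apply Rabs_le. pose proof (dslow_drift_window c Hc). lra.
Qed.

Lemma fm0_lipschitz y : Rabs (y - es) < 1/20 -> Rabs (fm0 y - fm0 es) <= 9 * Rabs (y - es).
Proof.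
  apply (Lipschitz_near_es fm0 dfm0); [exact fm0_derive |].
  intros c Hc. apply Rabs_le. pose proof (dfm0_window c Hc). lra.
Qed.

Lemma fm2_lipschitz y : Rabs (y - es) < 1/20 -> Rabs (fm2 y - fm2 es) <= 11 * Rabs (y - es).
Proof.
  apply (Lipschitz_near_es fm2 dfm2); [exact fm2_derive |].
  intros c Hc. apply Rabs_le. pose proof (dfm2_window c Hc). lra.
Qed.

Definition lyap (T0 T2 eta : R) : R := (T0 - fm0 eta)^2 + (T2 - fm2 eta)^2 + (eta - es)^2.

Definition sqdist_eq (T0 T2 eta : R) : R := (T0 - fm0 es)^2 + (T2 - fm2 es)^2 + (eta - es)^2.

Lemma lyap_nonneg T0 T2 eta : 0 <= lyap T0 T2 eta.
Proof.
  unfold lyap. pose proof (pow2_ge_0 (T0 - fm0 eta)). pose proof (pow2_ge_0 (T2 - fm2 eta)).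
  pose proof (pow2_ge_0 (eta - es)). lra.
Qed.

Lemma lyap_small_near_es T0 T2 eta : lyap T0 T2 eta < 1/400 -> Rabs (eta - es) < 1/20.
Proof.
  unfold lyap. intros H. pose proof (pow2_ge_0 (T0 - fm0 eta)). pose proof (pow2_ge_0 (T2 - fm2 eta)).
  apply Rabs_def1; nra.
Qed.

Lemma lyap_le_sqdist_eq T0 T2 eta : Rabs (eta - es) < 1/20 ->
  lyap T0 T2 eta <= 405 * sqdist_eq T0 T2 eta.
Proof.
  intros Hy. unfold lyap, sqdist_eq.
  replace (T0 - fm0 eta) with ((T0 - fm0 es) + - (fm0 eta - fm0 es)) by ring.
  replace (T2 - fm2 eta) with ((T2 - fm2 es) + - (fm2 eta - fm2 es)) by ring.
  apply sq_shear_le; rewrite Rabs_Ropp; [apply fm0_lipschitz | apply fm2_lipschitz]; exact Hy.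
Qed.

Lemma sqdist_eq_le_lyap T0 T2 eta : lyap T0 T2 eta < 1/400 ->
  sqdist_eq T0 T2 eta <= 405 * lyap T0 T2 eta.
Proof.
  intros HL. pose proof (lyap_small_near_es T0 T2 eta HL) as Hy. unfold lyap, sqdist_eq.
  replace (T0 - fm0 es) with ((T0 - fm0 eta) + (fm0 eta - fm0 es)) by ring.
  replace (T2 - fm2 es) with ((T2 - fm2 eta) + (fm2 eta - fm2 es)) by ring.
  apply sq_shear_le; [apply fm0_lipschitz | apply fm2_lipschitz]; exact Hy.
Qed.

Definition lyap_dot (T0 T2 eta D0 D2 Deta : R) : R :=
  2 * (T0 - fm0 eta) * (D0 - dfm0 eta * Deta) + 2 * (T2 - fm2 eta) * (D2 - dfm2 eta * Deta)
  + 2 * (eta - es) * Deta.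

Lemma lyap_derive (x0 x1 x2 : R -> R) t D0 D2 Deta :
  derivable_pt_lim x0 t D0 -> derivable_pt_lim x1 t D2 -> derivable_pt_lim x2 t Deta ->
  derivable_pt_lim (fun t => lyap (x0 t) (x1 t) (x2 t)) t
    (lyap_dot (x0 t) (x1 t) (x2 t) D0 D2 Deta).
Proof.
  intros H0 H1 H2.
  assert (Hu : derivable_pt_lim (fun t => x0 t - fm0 (x2 t)) t (D0 - dfm0 (x2 t) * Deta)).
  { apply (derivable_pt_lim_minus x0 (fun t => fm0 (x2 t))); [exact H0 |].
    apply (derivable_pt_lim_comp x2 fm0); [exact H2 | apply fm0_derive]. }
  assert (Hv : derivable_pt_lim (fun t => x1 t - fm2 (x2 t)) t (D2 - dfm2 (x2 t) * Deta)).
  { apply (derivable_pt_lim_minus x1 (fun t => fm2 (x2 t))); [exact H1 |].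
    apply (derivable_pt_lim_comp x2 fm2); [exact H2 | apply fm2_derive]. }
  assert (Hw : derivable_pt_lim (fun t => x2 t - es) t (Deta - 0)).
  { apply (derivable_pt_lim_minus x2 (fun _ => es)); [exact H2 | apply derivable_pt_lim_const]. }
  pose proof (derivable_pt_lim_plus _ _ _ _ _
     (derivable_pt_lim_plus _ _ _ _ _ (derivable_pt_lim_mult _ _ _ _ _ Hu Hu)
        (derivable_pt_lim_mult _ _ _ _ _ Hv Hv))
     (derivable_pt_lim_mult _ _ _ _ _ Hw Hw)) as H.
  match type of H with derivable_pt_lim _ _ ?l =>
    replace (lyap_dot (x0 t) (x1 t) (x2 t) D0 D2 Deta) with l by (unfold lyap_dot; ring) end.
  apply is_derive_Reals. eapply is_derive_ext; [| apply is_derive_Reals; exact H].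
  intros s. unfold lyap, plus_fct, mult_fct. simpl. ring.
Qed.

Lemma lyap_dissipation Rr eps T0 T2 eta :
  0 < Rr -> 0 < eps -> 10^6 * eps <= Bc / Rr -> lyap T0 T2 eta < 1/400 ->
  lyap_dot T0 T2 eta (V_T0 Rr eps T0 T2 eta) (V_T2 Rr eps T0 T2 eta) (V_eta Rr eps T0 T2 eta)
  + eps * lyap T0 T2 eta <= 0.
Proof.
  intros HR Heps Hsmall HL.
  pose proof (lyap_small_near_es T0 T2 eta HL) as Hnear.
  pose proof (near_es_window eta Hnear) as Hwin.
  assert (Hb : 10^6 * eps <= (Bc + 6 * Dc) / Rr).
  { apply (Rle_trans _ _ _ Hsmall). unfold Rdiv. apply Rmult_le_compat_r;
      [left; apply Rinv_0_lt_compat; exact HR | unfold Dc; lra]. }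
  assert (Hp : Rabs (p2 eta) <= 1) by (apply Rabs_le; pose proof (p2_window eta Hwin); lra).
  assert (Hd0 : Rabs (dfm0 eta) <= 9) by (apply Rabs_le; pose proof (dfm0_window eta Hwin); lra).
  assert (Hd2 : Rabs (dfm2 eta) <= 11) by (apply Rabs_le; pose proof (dfm2_window eta Hwin); lra).
  pose proof (dissipation_inequality (Bc / Rr) ((Bc + 6 * Dc) / Rr) eps
     (T0 - fm0 eta) (T2 - fm2 eta) (eta - es) (p2 eta) (dfm0 eta) (dfm2 eta) (slow_drift eta)
     Heps Hsmall Hb Hp Hd0 Hd2 (slow_drift_restoring eta Hnear) (slow_drift_lipschitz eta Hnear)) as C.
  (* near es we have eta < rho, so V is the branch V^- *)
  assert (Hf0 : f0 eta = fm0 eta) by (unfold f0; destruct (Rlt_dec eta rho); [reflexivity | unfold rho in *; lra]).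
  assert (Hf2 : f2 eta = fm2 eta) by (unfold f2; destruct (Rlt_dec eta rho); [reflexivity | unfold rho in *; lra]).
  simpl in C. unfold lyap_dot, lyap, V_T0, V_T2, V_eta. rewrite Hf0, Hf2. unfold slow_drift, Tc in *.
  eapply Rle_trans; [| exact C]. right. unfold Rdiv. ring.
Qed.

Section Dynamics.

Variables Rr eps : R.
Hypothesis Rr_pos : 0 < Rr.
Hypothesis eps_pos : 0 < eps.
Hypothesis eps_small : 10^6 * eps <= Bc / Rr.

Lemma lyap_decay x0 x1 x2 Tend c :
  is_solution_on Rr eps x0 x1 x2 Tend -> 0 < c < Tend -> lyap (x0 c) (x1 c) (x2 c) < 1/400 ->
  forall t, c <= t < Tend ->
  lyap (x0 t) (x1 t) (x2 t) * (1 + eps * (t - c)) <= lyap (x0 c) (x1 c) (x2 c).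
Proof.
  intros [_ Hsol] Hc HLc t Ht.
  apply (sublevel_decay (fun t => lyap (x0 t) (x1 t) (x2 t))
    (fun t => lyap_dot (x0 t) (x1 t) (x2 t) (V_T0 Rr eps (x0 t) (x1 t) (x2 t))
       (V_T2 Rr eps (x0 t) (x1 t) (x2 t)) (V_eta Rr eps (x0 t) (x1 t) (x2 t))) eps (1/400) c t);
    [lra | lra | exact HLc | | | | lra].
  - intros s Hs. destruct (Hsol s ltac:(lra)) as [D0 [D2 Deta]]. exact (lyap_derive x0 x1 x2 s _ _ _ D0 D2 Deta).
  - intros s _. apply lyap_nonneg.
  - intros s _ HLs. exact (lyap_dissipation Rr eps _ _ _ Rr_pos eps_pos eps_small HLs).
Qed.

(* A solution is only differentiable for t > 0, so the decay estimate starts at a small time c. *)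
Lemma lyap_small_at_some_start x0 x1 x2 Tend tm d lam :
  is_solution_on Rr eps x0 x1 x2 Tend -> 0 < tm <= Tend -> 0 < d <= 1/40 -> 4860 * d^2 < lam ->
  dist3 (x0 0) (x1 0) (x2 0) (fm0 es) (fm2 es) es < d ->
  exists c, 0 < c < tm /\ lyap (x0 c) (x1 c) (x2 c) < lam.
Proof.
  intros [Hcont _] Htm Hd Hlam Hd0.
  destruct (Hcont 0 ltac:(lra) d ltac:(lra)) as [r [Hr Hclose]].
  set (c := Rmin tm r / 2).
  assert (Hm : 0 < Rmin tm r) by (apply Rmin_glb_lt; lra).
  assert (Hc : 0 < c < tm) by (pose proof (Rmin_l tm r); unfold c; lra).
  assert (Hcr : c < r) by (pose proof (Rmin_r tm r); unfold c; lra).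
  assert (Hd1 : dist3 (x0 c) (x1 c) (x2 c) (x0 0) (x1 0) (x2 0) < d).
  { apply Hclose; [lra | rewrite Rminus_0_r, Rabs_right by lra; exact Hcr]. }
  destruct (Rabs_le_dist3 (x0 c) (x1 c) (x2 c) (x0 0) (x1 0) (x2 0)) as [A0 [A1 A2]].
  destruct (Rabs_le_dist3 (x0 0) (x1 0) (x2 0) (fm0 es) (fm2 es) es) as [B0 [B1 B2]].
  assert (near : forall a b e, Rabs (a - b) < d -> Rabs (b - e) < d ->
                  Rabs (a - e) < 2 * d /\ (a - e)^2 < 4 * d^2).
  { intros a b e Hab Hbe.
    assert (Hae : Rabs (a - e) < 2 * d).
    { replace (a - e) with ((a - b) + (b - e)) by ring. pose proof (Rabs_triang (a - b) (b - e)). lra. }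
    split; [exact Hae |]. rewrite <- pow2_abs. pose proof (Rabs_pos (a - e)). nra. }
  destruct (near (x0 c) (x0 0) (fm0 es) ltac:(lra) ltac:(lra)) as [_ N0].
  destruct (near (x1 c) (x1 0) (fm2 es) ltac:(lra) ltac:(lra)) as [_ N1].
  destruct (near (x2 c) (x2 0) es ltac:(lra) ltac:(lra)) as [N2' N2].
  exists c. split; [exact Hc |].
  pose proof (lyap_le_sqdist_eq (x0 c) (x1 c) (x2 c) ltac:(lra)). unfold sqdist_eq in *. lra.
Qed.

Lemma equilibrium_lyapunov_stable : lyapunov_stable Rr eps (fm0 es) (fm2 es) es.
Proof.
  intros e He.
  set (lam := Rmin (1/400) (e^2 / 405)).
  assert (Hlam : 0 < lam) by (apply Rmin_glb_lt; [lra | pose proof (pow_lt e 2 He); lra]).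
  assert (Hlam1 : lam <= 1/400) by apply Rmin_l.
  assert (Hlam2 : lam <= e^2 / 405) by apply Rmin_r.
  set (d := Rmin (Rmin (1/40) (lam / 5000)) e).
  assert (Hd : 0 < d) by (apply Rmin_glb_lt; [apply Rmin_glb_lt |]; lra).
  assert (Hd1 : d <= Rmin (1/40) (lam / 5000)) by apply Rmin_l.
  assert (Hde : d <= e) by apply Rmin_r.
  pose proof (Rmin_l (1/40) (lam / 5000)). pose proof (Rmin_r (1/40) (lam / 5000)).
  exists d. split; [exact Hd |].
  intros x0 x1 x2 Tend HT Hsol Hd0 t Ht.
  destruct (Req_dec t 0) as [-> | Ht0]; [lra |].
  destruct (lyap_small_at_some_start x0 x1 x2 Tend t d lam Hsol ltac:(lra) ltac:(lra) ltac:(nra) Hd0)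
    as [c [Hc HLc]].
  pose proof (lyap_decay x0 x1 x2 Tend c Hsol ltac:(lra) ltac:(lra) t ltac:(lra)) as Hdecay.
  pose proof (lyap_nonneg (x0 t) (x1 t) (x2 t)).
  assert (0 <= eps * (t - c)) by (apply Rmult_le_pos; lra).
  assert (HLt : lyap (x0 t) (x1 t) (x2 t) < lam) by nra.
  pose proof (sqdist_eq_le_lyap (x0 t) (x1 t) (x2 t) ltac:(lra)).
  apply dist3_lt; [exact He |]. unfold sqdist_eq in *. lra.
Qed.

Lemma equilibrium_attractive : attractive Rr eps (fm0 es) (fm2 es) es.
Proof.
  exists (1/2000000). split; [lra |].
  intros x0 x1 x2 Hglob Hd0 e He.
  destruct (lyap_small_at_some_start x0 x1 x2 1 1 (1/2000000) (1/400) (Hglob 1 ltac:(lra))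
              ltac:(lra) ltac:(lra) ltac:(lra) Hd0) as [c [Hc HLc]].
  (* the decay factor 1 + eps (t - c) exceeds 2 / e^2 after time c + 2 / (eps e^2) *)
  assert (He2 : 0 < e^2) by (apply pow_lt; exact He).
  exists (c + 2 / (eps * e^2)). intros t Ht.
  assert (Hk : 2 <= eps * (t - c) * e^2).
  { assert (Hq : 2 / (eps * e^2) <= t - c) by lra.
    apply (Rmult_le_compat_l (eps * e^2)) in Hq; [| nra].
    replace (eps * e^2 * (2 / (eps * e^2))) with 2 in Hq by (field; lra). nra. }
  assert (Htpos : 0 < t - c).
  { assert (0 < 2 / (eps * e^2)) by (apply Rdiv_lt_0_compat; nra). lra. }
  pose proof (lyap_decay x0 x1 x2 (t + 1) c (Hglob (t + 1) ltac:(lra)) ltac:(lra) HLc t ltac:(lra)) as Hdecay.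
  pose proof (lyap_nonneg (x0 t) (x1 t) (x2 t)).
  assert (0 <= eps * (t - c)) by (apply Rmult_le_pos; lra).
  assert (HL : lyap (x0 t) (x1 t) (x2 t) < 1/400) by nra.
  pose proof (sqdist_eq_le_lyap (x0 t) (x1 t) (x2 t) HL).
  set (L := lyap (x0 t) (x1 t) (x2 t)) in *.
  assert (800 * L < e^2) by nra.
  apply dist3_lt; [exact He |]. unfold sqdist_eq in *. lra.
Qed.

End Dynamics.

Lemma equilibrium_at_root Rr eps : is_equilibrium Rr eps (fm0 es) (fm2 es) es.
Proof.
  assert (Hlt : es < rho) by (unfold rho; lra).
  unfold is_equilibrium, V_T0, V_T2, V_eta, f0, f2.
  destruct (Rlt_dec es rho) as [_ | Hn]; [| lra].
  unfold slow_drift, Tc in *. repeat split; try ring. rewrite Rminus_0_r, es_root. ring.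
Qed.

End Equilibrium.

Theorem proposition4 :
  forall Rr : R, 0 < Rr ->
  exists eps0 : R, 0 < eps0 /\
    forall eps : R, 0 < eps < eps0 ->
      exists T0s T2s etas : R,
        0 < etas < rho /\
        asymptotically_stable_equilibrium Rr eps T0s T2s etas.
Proof.
  intros Rr HR.
  destruct slow_drift_root as [es [Hes Hroot]].
  assert (HB : 0 < Bc / Rr) by (apply Rdiv_lt_0_compat; [unfold Bc; lra | exact HR]).
  exists (Bc / Rr / 10^6). split; [lra |].
  intros eps [Heps Heps0].
  assert (Hsmall : 10^6 * eps <= Bc / Rr) by lra.
  exists (fm0 es), (fm2 es), es. split; [unfold rho; lra |].
  split; [| split].
  - exact (equilibrium_at_root es Hes Hroot Rr eps).
  - exact (equilibrium_lyapunov_stable es Hes Hroot Rr eps HR Heps Hsmall).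
  - exact (equilibrium_attractive es Hes Hroot Rr eps HR Heps Hsmall).
Qed.
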